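(* Let $m\in(0,1)$ and let $(\alpha_i)_{i\ge1}$ be a sequence in $(0,1)$. For $n\ge2$ put $\hat\alpha_n:=n\big(1-(\sum_{i=1}^n\frac1{n-\alpha_i})^{-1}\big)$ and suppose $\hat\alpha_\infty:=\lim_{n\to\infty}\hat\alpha_n$ exists and is positive. For $n\ge2$ and $1\le i\le n$ define the curved interior equilibrium quantities $$\bar x_n^*=1-\frac{nm}{n-1}\Big(\frac1{\hat\alpha_n}-1\Big),\quad x_{i,n}^*=\frac{(n-1)\alpha_i-n(1-\alpha_i)(m-\bar x_n^* )}{n-\alpha_i},\quad G_{i,n}^*=x_{i,n}^*+m-\bar x_n^*,\quad L_{i,n}^*=1-x_{i,n}^*.$$ Then, for each fixed $i$, as $n\to\infty$: $\bar x_n^*\to 1-m\big(\frac1{\hat\alpha_\infty}-1\big)$; $x_{i,n}^*\to \alpha_i-(1-\alpha_i)\big(\frac m{\hat\alpha_\infty}-1\big)$; $\frac{L^*_{i,n}}{1-\alpha_i}\to\frac m{\hat\alpha_\infty}$; and $\frac{G^*_{i,n}}{\alpha_i}\to\frac m{\hat\alpha_\infty}$.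
   Context: These quantities are the average effort, individual efforts, curved grades and leisure in a curved pure Nash equilibrium with all efforts positive of the $n$-student curved-exam game, in which student $i$ has ability $\alpha_i$, chooses effort $x_i\in[0,1]$, receives grade $x_i+\max(m-\bar x,0)$ with $\bar x$ the class mean effort, and has payoff $G_i^{\alpha_i}(1-x_i)^{1-\alpha_i}$. *)

From Stdlib Require Import Reals.
From Coquelicot Require Import Coquelicot.
Open Scope R_scope.

(* Abilities are indexed by i >= 1 : a 1, a 2, ... (a 0 is unused). *)

Definition alpha_hat (a : nat -> R) (n : nat) : R :=
  INR n * (1 - / sum_n_m (fun i => / (INR n - a i)) 1 n).

Definition xbar_star (a : nat -> R) (m : R) (n : nat) : R :=
  1 - INR n * m / (INR n - 1) * (/ alpha_hat a n - 1).

Definition x_star (a : nat -> R) (m : R) (i n : nat) : R :=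
  ((INR n - 1) * a i - INR n * (1 - a i) * (m - xbar_star a m n))
  / (INR n - a i).

Definition G_star (a : nat -> R) (m : R) (i n : nat) : R :=
  x_star a m i n + m - xbar_star a m n.

Definition L_star (a : nat -> R) (m : R) (i n : nat) : R :=
  1 - x_star a m i n.

(** Every equilibrium quantity is a rational expression in [n], the ability
    [a i], the mark [m] and [/ alpha_hat a n] whose [n]-dependence is only
    through ratios [(n - c) / (n - b)], which tend to 1.  The limits follow by
    continuity once [/ alpha_hat a n] tends to [/ ahinf]; only [ahinf <> 0]
    and [a i <> 0, 1] are needed, not the remaining bounds on [m] and [a]. *)

From Stdlib Require Import Reals Lra.
From Coquelicot Require Import Coquelicot.
Open Scope R_scope.

Lemma is_lim_seq_INR_ratio (b c : R) :
  is_lim_seq (fun n => (INR n - c) / (INR n - b)) 1.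
Proof.
  assert (Hinf : is_lim_seq (fun n => INR n - b) p_infty).
  { eapply is_lim_seq_minus; [exact is_lim_seq_INR | apply is_lim_seq_const |].
    easy. }
  assert (Hpos : eventually (fun n => 0 < INR n - b)).
  { apply Hinf. exists 0. easy. }
  apply is_lim_seq_ext_loc with (u := fun n => 1 + (b - c) * / (INR n - b)).
  - apply (filter_imp (fun n => 0 < INR n - b)); [|exact Hpos].
    intros n Hn. field. lra.
  - replace (Finite 1) with (Finite (1 + (b - c) * 0)) by (f_equal; ring).
    apply is_lim_seq_plus'; [apply is_lim_seq_const |].
    apply is_lim_seq_mult'; [apply is_lim_seq_const |].
    apply (is_lim_seq_inv _ _ Hinf). easy.
Qed.

Section CurvedEquilibriumLimits.

Variables (a : nat -> R) (m l : R).
Hypothesis alpha_hat_lim : is_lim_seq (alpha_hat a) l.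
Hypothesis l_neq0 : l <> 0.

Lemma is_lim_seq_xbar_star : is_lim_seq (xbar_star a m) (1 - m * (/ l - 1)).
Proof.
  assert (Hinv : is_lim_seq (fun n => / alpha_hat a n) (/ l)).
  { apply (is_lim_seq_inv _ _ alpha_hat_lim).
    intro E; injection E; exact l_neq0. }
  apply is_lim_seq_ext with
    (u := fun n => 1 - (INR n - 0) / (INR n - 1) * m * (/ alpha_hat a n - 1)).
  { intro n. unfold xbar_star, Rdiv. ring. }
  replace (1 - m * (/ l - 1)) with (1 - 1 * m * (/ l - 1)) by ring.
  apply is_lim_seq_minus'; [apply is_lim_seq_const |].
  apply is_lim_seq_mult';
    [apply is_lim_seq_mult'; [apply is_lim_seq_INR_ratio | apply is_lim_seq_const] |].
  apply is_lim_seq_minus'; [exact Hinv | apply is_lim_seq_const].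
Qed.

Variable i : nat.

Lemma is_lim_seq_x_star :
  is_lim_seq (fun n => x_star a m i n) (a i - (1 - a i) * (m / l - 1)).
Proof.
  apply is_lim_seq_ext with
    (u := fun n => (INR n - 1) / (INR n - a i) * a i
                   - (INR n - 0) / (INR n - a i) * (1 - a i) * (m - xbar_star a m n)).
  { intro n. unfold x_star, Rdiv. ring. }
  replace (a i - (1 - a i) * (m / l - 1)) with
    (1 * a i - 1 * (1 - a i) * (m - (1 - m * (/ l - 1)))) by (field; exact l_neq0).
  apply is_lim_seq_minus'.
  - apply is_lim_seq_mult'; [apply is_lim_seq_INR_ratio | apply is_lim_seq_const].
  - apply is_lim_seq_mult';
      [apply is_lim_seq_mult'; [apply is_lim_seq_INR_ratio | apply is_lim_seq_const] |].
    apply is_lim_seq_minus'; [apply is_lim_seq_const | exact is_lim_seq_xbar_star].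
Qed.

Lemma is_lim_seq_L_star_div (ai_neq1 : a i <> 1) :
  is_lim_seq (fun n => L_star a m i n / (1 - a i)) (m / l).
Proof.
  replace (m / l) with ((1 - (a i - (1 - a i) * (m / l - 1))) / (1 - a i))
    by (field; split; [exact l_neq0 | lra]).
  apply is_lim_seq_mult'; [| apply is_lim_seq_const].
  apply is_lim_seq_minus'; [apply is_lim_seq_const | exact is_lim_seq_x_star].
Qed.

Lemma is_lim_seq_G_star_div (ai_neq0 : a i <> 0) :
  is_lim_seq (fun n => G_star a m i n / a i) (m / l).
Proof.
  replace (m / l) with
    ((a i - (1 - a i) * (m / l - 1) + m - (1 - m * (/ l - 1))) / a i)
    by (field; split; [exact l_neq0 | exact ai_neq0]).
  apply is_lim_seq_mult'; [| apply is_lim_seq_const].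
  apply is_lim_seq_minus'; [| exact is_lim_seq_xbar_star].
  apply is_lim_seq_plus'; [exact is_lim_seq_x_star | apply is_lim_seq_const].
Qed.

End CurvedEquilibriumLimits.

Theorem mainTheorem9 (m : R) (a : nat -> R) (ahinf : R)
  (Hm : 0 < m < 1)
  (Ha : forall i : nat, (1 <= i)%nat -> 0 < a i < 1)
  (Hlim : is_lim_seq (alpha_hat a) ahinf)
  (Hpos : 0 < ahinf) :
  is_lim_seq (xbar_star a m) (1 - m * (/ ahinf - 1)) /\
  (forall i : nat, (1 <= i)%nat ->
     is_lim_seq (fun n => x_star a m i n)
       (a i - (1 - a i) * (m / ahinf - 1)) /\
     is_lim_seq (fun n => L_star a m i n / (1 - a i)) (m / ahinf) /\
     is_lim_seq (fun n => G_star a m i n / a i) (m / ahinf)).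
Proof.
  assert (ahinf_neq0 : ahinf <> 0) by lra.
  split; [exact (is_lim_seq_xbar_star a m ahinf Hlim ahinf_neq0) |].
  intros i Hi. destruct (Ha i Hi) as [ai_pos ai_lt1].
  split; [exact (is_lim_seq_x_star a m ahinf Hlim ahinf_neq0 i) |].
  split.
  - apply is_lim_seq_L_star_div; [exact Hlim | exact ahinf_neq0 | lra].
  - apply is_lim_seq_G_star_div; [exact Hlim | exact ahinf_neq0 | lra].
Qed.
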